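(* (1) $I$ is a closed (two-sided) ideal in $A^\mathcal U$ (and $I\subseteq A^{c\mathcal U}$). (2) The $\mathrm{C}^*$-algebra $A^{c\mathcal U}/I$ is unital. (3) The map $q\circ\Delta:A\to A^{c\mathcal U}/I$ is injective, where $q:A^{c\mathcal U}\to A^{c\mathcal U}/I$ is the quotient map and $\Delta(a)=(a,a,\dots)^\bullet$ is the diagonal embedding. (4) $(q\circ\Delta)(A)$ is an essential ideal in $A^{c\mathcal U}/I$.
   Context: $X$ is a second countable, locally compact space with basepoint $o$ and a fixed compatible proper metric $d$; $B(r)$ is the closed ball of radius $r$ about $o$. $A=C_0(X)$. $\mathcal U$ is a nonprincipal ultrafilter on $\mathbb N$, and $A^\mathcal U=\ell^\infty(A)/\{(f_n):\lim_{n,\mathcal U}\|f_n\|=0\}$ is the ultrapower, with $(f_n)^\bullet$ the class of $(f_n)$. A sequence $(f_n)\in\ell^\infty(A)$ is $\mathcal U$-equicontinuous on bounded sets if for every $r,\epsilon>0$ there is $\delta>0$ such that for a set of $n$ belonging to $\mathcal U$, $|f_n(s)-f_n(t)|\le\epsilon$ for all $s,t\in B(r)$ with $d(s,t)<\delta$; $A^{c\mathcal U}$ is the $\mathrm{C}^*$-subalgebra of $A^\mathcal U$ consisting of classes of such sequences. $I:=\{(f_n)^\bullet\in A^\mathcal U:\exists r_n\in\mathbb R \text{ with } \lim_{n,\mathcal U}r_n=+\infty \text{ and } f_n|_{B(r_n)}\equiv 0\text{ for all } n\}$. An ideal $J$ in a $\mathrm{C}^*$-algebra $C$ is essential if $cJ=0$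 implies $c=0$ for $c\in C$. *)

From Stdlib Require Import Reals List.
Open Scope R_scope.

Record Cx := mkC { re : R; im : R }.
Definition C0x : Cx := mkC 0 0.
Definition Cadd (z w : Cx) : Cx := mkC (re z + re w) (im z + im w).
Definition Copp (z : Cx) : Cx := mkC (- re z) (- im z).
Definition Csub (z w : Cx) : Cx := Cadd z (Copp w).
Definition Cmul (z w : Cx) : Cx :=
  mkC (re z * re w - im z * im w) (re z * im w + im z * re w).
Definition Cnorm (z : Cx) : R := sqrt (re z * re z + im z * im z).

Section Space.
Variable X : Type.
Variable d : X -> X -> R.

Definition is_metric : Prop :=
  (forall x y, 0 <= d x y) /\ (forall x y, d x y = 0 <-> x = y) /\
  (forall x y, d x y = d y x) /\ (forall x y z, d x z <= d x y + d y z).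

(** Topology of X = the metric topology of d ("compatible metric"). *)
Definition open_set (S : X -> Prop) : Prop :=
  forall x, S x -> exists e, 0 < e /\ forall y, d x y < e -> S y.

Definition compact_set (K : X -> Prop) : Prop :=
  forall (Ix : Type) (G : Ix -> X -> Prop),
    (forall i, open_set (G i)) -> (forall x, K x -> exists i, G i x) ->
    exists l : list Ix, forall x, K x -> exists i, In i l /\ G i x.

Definition closed_ball (c : X) (r : R) : X -> Prop := fun x => d c x <= r.

Definition proper_metric : Prop :=
  forall c r, compact_set (closed_ball c r).

Definition second_countable : Prop :=
  exists B : nat -> X -> Prop, (forall n, open_set (B n)) /\
    forall S x, open_set S -> S x ->
      exists n, B n x /\ forall y, B n y -> S y.

Definition locally_compact : Prop :=
  forall x, exists V K, open_set V /\ compact_set K /\ V x /\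
    forall y, V y -> K y.

(** A = C_0(X) (complex valued) *)
Definition continuous (f : X -> Cx) : Prop :=
  forall x e, 0 < e -> exists del, 0 < del /\
    forall y, d x y < del -> Cnorm (Csub (f y) (f x)) < e.

Definition C0 (f : X -> Cx) : Prop :=
  continuous f /\
  forall e, 0 < e -> exists K, compact_set K /\
    forall x, ~ K x -> Cnorm (f x) < e.

(** Sequences of functions, representatives of elements of A^U *)
Definition Seq := nat -> X -> Cx.

Definition seq_add (F G : Seq) : Seq := fun n x => Cadd (F n x) (G n x).
Definition seq_sub (F G : Seq) : Seq := fun n x => Csub (F n x) (G n x).
Definition seq_mul (F G : Seq) : Seq := fun n x => Cmul (F n x) (G n x).
Definition seq_scal (c : Cx) (F : Seq) : Seq := fun n x => Cmul c (F n x).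
Definition seq_zero : Seq := fun _ _ => C0x.
Definition diag (a : X -> Cx) : Seq := fun _ => a.

Definition InSeq (F : Seq) : Prop :=
  (forall n, C0 (F n)) /\ exists M, forall n x, Cnorm (F n x) <= M.

Variable U : (nat -> Prop) -> Prop.

Definition ultrafilter : Prop :=
  (forall P Q : nat -> Prop, U P -> (forall n, P n -> Q n) -> U Q) /\
  (forall P Q, U P -> U Q -> U (fun n => P n /\ Q n)) /\
  ~ U (fun _ => False) /\
  (forall P, U P \/ U (fun n => ~ P n)).

Definition nonprincipal : Prop := forall k, U (fun n => n <> k).

(** lim_{n,U} ||F_n|| <= e  (sup norm) *)
Definition ult_le (F : Seq) (e : R) : Prop :=
  forall eta, 0 < eta -> U (fun n => forall x, Cnorm (F n x) <= e + eta).

Definition ult_null (F : Seq) : Prop := ult_le F 0.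

(** same class in A^U *)
Definition ueq (F G : Seq) : Prop := ult_null (seq_sub F G).

Variable o : X.

Definition uequicont (F : Seq) : Prop :=
  forall r e, 0 < r -> 0 < e -> exists del, 0 < del /\
    U (fun n => forall s t, d o s <= r -> d o t <= r -> d s t < del ->
         Cnorm (Csub (F n s) (F n t)) <= e).

(** the class of F lies in A^{cU} *)
Definition InCU (F : Seq) : Prop :=
  InSeq F /\ exists G, InSeq G /\ ueq F G /\ uequicont G.

(** the class of F lies in I *)
Definition InI (F : Seq) : Prop :=
  InSeq F /\ exists (G : Seq) (r : nat -> R), InSeq G /\ ueq F G /\
    (forall M, U (fun n => M <= r n)) /\
    forall n x, d o x <= r n -> G n x = C0x.
End Space.

(* The ideal I consists exactly of the bounded sequences converging to 0 uniformly on
   every ball along U: from such a sequence a diagonal argument yields radii r_n -> oo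
   along U with |f_n| <= 1/r_n on B(r_n + 1), and cutting f_n off by a Lipschitz bump
   gives an equivalent representative vanishing on B(r_n).  With this description the
   ideal properties are routine, the bumps equal to 1 on B(n - 1) form a unit modulo I,
   Delta is injective by evaluating at points, and Delta(A) is essential because
   multiplication by a bump equal to 1 on B(r + 1) does not change a function on B(r).
   Delta(A) is an ideal: for (g_n) U-equicontinuous, the pointwise U-limit b of g_n a is
   continuous, vanishes at infinity with a, and by compactness of balls the convergence
   is uniform, so (g_n a) = Delta(b) modulo I.  Delta(A) is closed modulo I since the
   approximants are uniformly Cauchy and C_0(X) is complete. *)

From Stdlib Require Import Reals List Lra Lia Psatz Classical ClassicalEpsilon
  FunctionalExtensionality.
(* After [Reals], whose [open_set] would otherwise shadow the one of [Defs]. *)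
From Pilot Require Import Defs.
Open Scope R_scope.

Definition Cone : Cx := mkC 1 0.

Lemma Cx_ext z w : re z = re w -> im z = im w -> z = w.
Proof. destruct z, w; simpl; intros; subst; auto. Qed.

Ltac cx_ring := intros; apply Cx_ext; unfold Csub, Cadd, Copp, Cmul, C0x, Cone; simpl; ring.

Lemma Cmul_1l z : Cmul Cone z = z.  Proof. cx_ring. Qed.
Lemma Cmul_comm z w : Cmul z w = Cmul w z. Proof. cx_ring. Qed.

Lemma Cnorm_ge0 z : 0 <= Cnorm z.
Proof. apply sqrt_pos. Qed.

Lemma Cnorm_sq z : Cnorm z * Cnorm z = re z * re z + im z * im z.
Proof. apply sqrt_sqrt; nra. Qed.

Lemma Cnorm_C0 : Cnorm C0x = 0.
Proof. unfold Cnorm, C0x; simpl; rewrite Rmult_0_l, Rplus_0_l; apply sqrt_0. Qed.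

Lemma Cnorm_eq0 z : Cnorm z = 0 -> z = C0x.
Proof.
  intros H; pose proof (Cnorm_sq z) as Hsq; rewrite H in Hsq.
  destruct z as [a b]; simpl in *; unfold C0x; f_equal; nra.
Qed.

Lemma Cnorm_mul z w : Cnorm (Cmul z w) = Cnorm z * Cnorm w.
Proof.
  destruct z as [a b], w as [c e]; unfold Cnorm, Cmul; simpl.
  rewrite <- sqrt_mult by nra; f_equal; ring.
Qed.

Lemma Cnorm_opp z : Cnorm (Copp z) = Cnorm z.
Proof. destruct z; unfold Cnorm, Copp; simpl; f_equal; ring. Qed.

Lemma Cnorm_re z : Rabs (re z) <= Cnorm z.
Proof. pose proof (Cnorm_sq z); pose proof (Cnorm_ge0 z); apply Rabs_le; split; nra. Qed.

Lemma Cnorm_im z : Rabs (im z) <= Cnorm z.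
Proof. pose proof (Cnorm_sq z); pose proof (Cnorm_ge0 z); apply Rabs_le; split; nra. Qed.

Lemma Cnorm_le_re_im z : Cnorm z <= Rabs (re z) + Rabs (im z).
Proof.
  pose proof (Cnorm_sq z); pose proof (Cnorm_ge0 z).
  pose proof (Rabs_pos (re z)); pose proof (Rabs_pos (im z)).
  assert (re z * re z = Rabs (re z) * Rabs (re z)) by (rewrite <- Rabs_mult; symmetry; apply Rabs_right; nra).
  assert (im z * im z = Rabs (im z) * Rabs (im z)) by (rewrite <- Rabs_mult; symmetry; apply Rabs_right; nra).
  nra.
Qed.

Lemma Cnorm_triangle z w : Cnorm (Cadd z w) <= Cnorm z + Cnorm w.
Proof.
  pose proof (Cnorm_sq z); pose proof (Cnorm_sq w); pose proof (Cnorm_sq (Cadd z w)).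
  pose proof (Cnorm_ge0 z); pose proof (Cnorm_ge0 w); pose proof (Cnorm_ge0 (Cadd z w)).
  destruct z as [a b], w as [c e]; unfold Cadd in *; simpl in *.
  (* Cauchy-Schwarz for the real inner product of (a,b) and (c,e) *)
  assert (a * c + b * e <= Cnorm (mkC a b) * Cnorm (mkC c e)).
  { assert ((a*c + b*e) * (a*c + b*e) <= (a*a + b*b) * (c*c + e*e))
      by (pose proof (Rle_0_sqr (a*e - b*c)); unfold Rsqr in *; nra).
    destruct (Rle_lt_dec (a * c + b * e) (Cnorm (mkC a b) * Cnorm (mkC c e))); auto.
    assert (0 <= Cnorm (mkC a b) * Cnorm (mkC c e)) by nra; nra. }
  nra.
Qed.

Lemma Cnorm_sub_sym z w : Cnorm (Csub z w) = Cnorm (Csub w z).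
Proof. replace (Csub z w) with (Copp (Csub w z)) by cx_ring; apply Cnorm_opp. Qed.

Lemma Cnorm_sub_triangle z u w : Cnorm (Csub z w) <= Cnorm (Csub z u) + Cnorm (Csub u w).
Proof. replace (Csub z w) with (Cadd (Csub z u) (Csub u w)) by cx_ring; apply Cnorm_triangle. Qed.

Lemma Cnorm_sub_le z w : Cnorm (Csub z w) <= Cnorm z + Cnorm w.
Proof. unfold Csub; rewrite <- (Cnorm_opp w); apply Cnorm_triangle. Qed.

Lemma Cnorm_le_sub z w : Cnorm z <= Cnorm w + Cnorm (Csub z w).
Proof. replace z with (Cadd w (Csub z w)) at 1 by cx_ring; apply Cnorm_triangle. Qed.

Lemma Cnorm_real r : Cnorm (mkC r 0) = Rabs r.
Proof. unfold Cnorm; simpl; rewrite Rmult_0_l, Rplus_0_r; apply sqrt_Rsqr_abs. Qed.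

Lemma Csub_eq0 z w : Cnorm (Csub z w) = 0 -> z = w.
Proof.
  intros H; apply Cnorm_eq0 in H; destruct z, w; unfold Csub, Cadd, Copp, C0x in H.
  simpl in H; injection H; intros; f_equal; lra.
Qed.

Lemma Cmul_le z w B C : Cnorm z <= B -> Cnorm w <= C -> 0 <= C ->
  Cnorm (Cmul z w) <= B * C.
Proof.
  intros; rewrite Cnorm_mul; pose proof (Cnorm_ge0 z); pose proof (Cnorm_ge0 w); nra.
Qed.

Lemma nat_above (r : R) : exists n : nat, r < INR n.
Proof. destruct (INR_archimed 1 r) as [n Hn]; [lra|]; exists n; lra. Qed.

Lemma Rmult_div_half_le M e : 0 <= M -> 0 < e -> M * (e / (2 * (M + 1))) <= e / 2.
Proof.
  intros HM He; replace (M * (e / (2 * (M + 1)))) with (e / 2 * (M / (M + 1))) by (field; lra).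
  enough (M / (M + 1) <= 1) by nra.
  apply Rmult_le_reg_r with (M + 1); [lra|]; field_simplify; lra.
Qed.

Lemma Rdiv_half_pos M e : 0 <= M -> 0 < e -> 0 < e / (2 * (M + 1)).
Proof. intros; apply Rdiv_lt_0_compat; lra. Qed.

Lemma list_min_pos {A} (l : list A) (f : A -> R) :
  (forall y, In y l -> 0 < f y) -> exists del, 0 < del /\ forall y, In y l -> del <= f y.
Proof.
  induction l as [|a l IH]; intros H.
  - exists 1; split; [lra | intros y []].
  - destruct IH as [del [Hd Hl]]; [intros y Hy; apply H; right; auto|].
    exists (Rmin del (f a)); split; [apply Rmin_pos; auto; apply H; left; auto|].
    intros y [<-|Hy]; [apply Rmin_r | eapply Rle_trans; [apply Rmin_l | auto]].
Qed.

Lemma list_max_bound {A} (l : list A) (f : A -> R) : exists B, forall y, In y l -> f y <= B.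
Proof.
  induction l as [|a l [B HB]]; [exists 0; intros y []|].
  exists (Rmax B (f a)); intros y [<-|Hy]; [apply Rmax_r|].
  eapply Rle_trans; [apply HB; auto | apply Rmax_l].
Qed.

Definition clamp (t : R) : R := Rmax 0 (Rmin 1 t).

Lemma clamp_range t : 0 <= clamp t <= 1.
Proof. unfold clamp, Rmax, Rmin; repeat destruct Rle_dec; lra. Qed.

Lemma clamp_lipschitz a b : Rabs (clamp a - clamp b) <= Rabs (a - b).
Proof. unfold clamp, Rmax, Rmin; repeat destruct Rle_dec; unfold Rabs; repeat destruct Rcase_abs; lra. Qed.

Lemma clamp_1 t : 1 <= t -> clamp t = 1.
Proof. unfold clamp, Rmax, Rmin; repeat destruct Rle_dec; lra. Qed.

Lemma clamp_0 t : t <= 0 -> clamp t = 0.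
Proof. unfold clamp, Rmax, Rmin; repeat destruct Rle_dec; lra. Qed.

Definition inv_succ (k : nat) : R := / (INR k + 1).

Lemma inv_succ_pos k : 0 < inv_succ k.
Proof. apply Rinv_0_lt_compat; pose proof (pos_INR k); lra. Qed.

Lemma inv_succ_lt eps : 0 < eps -> exists k, inv_succ k < eps.
Proof.
  intros He; destruct (archimed_cor1 eps He) as [N [H1 H2]]; exists N.
  apply Rle_lt_trans with (/ INR N); auto.
  apply Rinv_le_contravar; [apply lt_0_INR; lia | lra].
Qed.

Lemma inv_succ_antitone k j : (k <= j)%nat -> inv_succ j <= inv_succ k.
Proof.
  intros H; apply le_INR in H; apply Rinv_le_contravar; [pose proof (pos_INR k)|]; lra.
Qed.

Lemma cauchy_limit_R (u : nat -> R) :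
  (forall k j, Rabs (u k - u j) <= inv_succ k + inv_succ j) ->
  exists L, forall k, Rabs (u k - L) <= inv_succ k.
Proof.
  intros Hu.
  assert (Hc : Cauchy_crit u).
  { intros eps He; destruct (inv_succ_lt (eps/2) ltac:(lra)) as [N HN]; exists N.
    intros n m Hn Hm; unfold Rdist; pose proof (Hu n m).
    pose proof (inv_succ_antitone N n Hn); pose proof (inv_succ_antitone N m Hm); lra. }
  destruct (R_complete u Hc) as [L HL]; exists L; intros k.
  apply Rle_plus_epsilon; intros eps He.
  destruct (HL (eps/2) ltac:(lra)) as [N HN].
  destruct (inv_succ_lt (eps/2) ltac:(lra)) as [j0 Hj0].
  specialize (HN (Nat.max N j0) ltac:(lia)); unfold Rdist in HN.
  pose proof (inv_succ_antitone j0 (Nat.max N j0) ltac:(lia)); pose proof (Hu k (Nat.max N j0)).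
  replace (u k - L) with ((u k - u (Nat.max N j0)) + (u (Nat.max N j0) - L)) by ring.
  eapply Rle_trans; [apply Rabs_triang | lra].
Qed.

Section Ultrapower.
Variables (X : Type) (d : X -> X -> R) (o : X) (U : (nat -> Prop) -> Prop).
Hypothesis Hmet : is_metric X d.
Hypothesis Hprop : proper_metric X d.
Hypothesis HU : ultrafilter U.
Hypothesis HUnp : nonprincipal U.

Lemma d_refl x : d x x = 0. Proof. apply Hmet; auto. Qed.
Lemma d_sym x y : d x y = d y x. Proof. apply Hmet. Qed.
Lemma d_triangle x y z : d x z <= d x y + d y z. Proof. apply Hmet. Qed.

Lemma open_ball c r : open_set X d (fun y => d c y < r).
Proof.
  intros x Hx; exists (r - d c x); split; [lra|].
  intros y Hy; pose proof (d_triangle c x y); lra.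
Qed.

Lemma compact_union K1 K2 : compact_set X d K1 -> compact_set X d K2 ->
  compact_set X d (fun x => K1 x \/ K2 x).
Proof.
  intros C1 C2 Ix G HG Hc.
  destruct (C1 Ix G HG) as [l1 H1]; [intros x Kx; apply Hc; auto|].
  destruct (C2 Ix G HG) as [l2 H2]; [intros x Kx; apply Hc; auto|].
  exists (l1 ++ l2); intros x [Kx|Kx].
  - destruct (H1 x Kx) as [i [Hi Gi]]; exists i; split; auto; apply in_or_app; auto.
  - destruct (H2 x Kx) as [i [Hi Gi]]; exists i; split; auto; apply in_or_app; auto.
Qed.

Lemma continuous_bounded_on_compact K f : compact_set X d K -> continuous X d f ->
  exists B, forall x, K x -> Cnorm (f x) <= B.
Proof.
  intros CK Hf.
  destruct (CK X (fun y z => exists del, 0 < del /\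
      (forall w, d y w < del -> Cnorm (Csub (f w) (f y)) < 1) /\ d y z < del)) as [l Hl].
  - intros y z [del [Hd [Hw Hz]]]; exists (del - d y z); split; [lra|].
    intros w Hzw; exists del; repeat split; auto; pose proof (d_triangle y z w); lra.
  - intros x _; exists x; destruct (Hf x 1) as [del [Hd Hw]]; [lra|].
    exists del; repeat split; auto; rewrite d_refl; lra.
  - destruct (list_max_bound l (fun y => Cnorm (f y) + 1)) as [B HB]; exists B.
    intros x Kx; destruct (Hl x Kx) as [y [Hy [del [Hd [Hw Hz]]]]].
    specialize (HB y Hy); specialize (Hw x Hz); pose proof (Cnorm_le_sub (f x) (f y)); lra.
Qed.

Lemma C0_bounded f : C0 X d f -> exists B, forall x, Cnorm (f x) <= B.
Proof.
  intros [Hc Hv]; destruct (Hv 1) as [K [CK HK]]; [lra|].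
  destruct (continuous_bounded_on_compact K f CK Hc) as [B HB].
  exists (Rmax B 1); intros x; destruct (classic (K x)).
  - eapply Rle_trans; [apply HB; auto | apply Rmax_l].
  - eapply Rle_trans; [left; apply HK; auto | apply Rmax_r].
Qed.

Lemma continuous_const z : continuous X d (fun _ => z).
Proof.
  intros x e He; exists 1; split; [lra|]; intros y _.
  replace (Csub z z) with C0x by cx_ring; rewrite Cnorm_C0; auto.
Qed.

Lemma continuous_add f g : continuous X d f -> continuous X d g ->
  continuous X d (fun x => Cadd (f x) (g x)).
Proof.
  intros Hf Hg x e He.
  destruct (Hf x (e/2)) as [d1 [Hd1 H1]]; [lra|].
  destruct (Hg x (e/2)) as [d2 [Hd2 H2]]; [lra|].
  exists (Rmin d1 d2); split; [apply Rmin_pos; auto|].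
  intros y Hy; pose proof (Rmin_l d1 d2); pose proof (Rmin_r d1 d2).
  replace (Csub (Cadd (f y) (g y)) (Cadd (f x) (g x)))
    with (Cadd (Csub (f y) (f x)) (Csub (g y) (g x))) by cx_ring.
  eapply Rle_lt_trans; [apply Cnorm_triangle|].
  specialize (H1 y ltac:(lra)); specialize (H2 y ltac:(lra)); lra.
Qed.

Lemma continuous_opp f : continuous X d f -> continuous X d (fun x => Copp (f x)).
Proof.
  intros Hf x e He; destruct (Hf x e He) as [del [Hd H]]; exists del; split; auto.
  intros y Hy; replace (Csub (Copp (f y)) (Copp (f x))) with (Copp (Csub (f y) (f x))) by cx_ring.
  rewrite Cnorm_opp; auto.
Qed.

Lemma continuous_mul f g : continuous X d f -> continuous X d g ->
  continuous X d (fun x => Cmul (f x) (g x)).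
Proof.
  intros Hf Hg x e He.
  set (A := Cnorm (f x)); set (B := Cnorm (g x)).
  assert (HA : 0 <= A) by apply Cnorm_ge0; assert (HB : 0 <= B) by apply Cnorm_ge0.
  destruct (Hf x (Rmin 1 (e / (2 * (B + 1))))) as [d1 [Hd1 H1]].
  { apply Rmin_pos; [lra | apply Rdiv_half_pos; auto]. }
  destruct (Hg x (e / (2 * (A + 1)))) as [d2 [Hd2 H2]]; [apply Rdiv_half_pos; auto|].
  exists (Rmin d1 d2); split; [apply Rmin_pos; auto|].
  intros y Hy; pose proof (Rmin_l d1 d2); pose proof (Rmin_r d1 d2).
  specialize (H1 y ltac:(lra)); specialize (H2 y ltac:(lra)).
  pose proof (Rmin_l 1 (e / (2 * (B + 1)))); pose proof (Rmin_r 1 (e / (2 * (B + 1)))).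
  replace (Csub (Cmul (f y) (g y)) (Cmul (f x) (g x)))
    with (Cadd (Cmul (f y) (Csub (g y) (g x))) (Cmul (Csub (f y) (f x)) (g x))) by cx_ring.
  eapply Rle_lt_trans; [apply Cnorm_triangle|]; rewrite !Cnorm_mul.
  assert (Hfy : Cnorm (f y) <= A + 1) by (pose proof (Cnorm_le_sub (f y) (f x)); unfold A; lra).
  pose proof (Rmult_div_half_le B e HB He).
  pose proof (Cnorm_ge0 (f y)); pose proof (Cnorm_ge0 (Csub (f y) (f x))).
  assert ((A + 1) * (e / (2 * (A + 1))) = e / 2) by (field; lra).
  pose proof (Cnorm_ge0 (Csub (g y) (g x))).
  assert (Cnorm (f y) * Cnorm (Csub (g y) (g x)) < e / 2) by nra.
  fold B; nra.
Qed.

Lemma C0_add f g : C0 X d f -> C0 X d g -> C0 X d (fun x => Cadd (f x) (g x)).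
Proof.
  intros [Hf Vf] [Hg Vg]; split; [apply continuous_add; auto|].
  intros e He; destruct (Vf (e/2)) as [K1 [C1 H1]]; [lra|].
  destruct (Vg (e/2)) as [K2 [C2 H2]]; [lra|].
  exists (fun x => K1 x \/ K2 x); split; [apply compact_union; auto|].
  intros x Hx; eapply Rle_lt_trans; [apply Cnorm_triangle|].
  specialize (H1 x ltac:(tauto)); specialize (H2 x ltac:(tauto)); lra.
Qed.

Lemma C0_sub f g : C0 X d f -> C0 X d g -> C0 X d (fun x => Csub (f x) (g x)).
Proof.
  intros Hf [Hg Vg]; apply (C0_add f (fun x => Copp (g x))); auto.
  split; [apply continuous_opp; auto|].
  intros e He; destruct (Vg e He) as [K [CK HK]]; exists K; split; auto.
  intros x Hx; rewrite Cnorm_opp; auto.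
Qed.

Lemma C0_mul_bounded f g B : C0 X d f -> continuous X d g ->
  (forall x, Cnorm (g x) <= B) -> C0 X d (fun x => Cmul (f x) (g x)).
Proof.
  intros [Hf Vf] Hg HB; split; [apply continuous_mul; auto|].
  intros e He; assert (HB0 : 0 <= B) by (eapply Rle_trans; [apply Cnorm_ge0 | apply (HB o)]).
  destruct (Vf (e / (B + 1))) as [K [CK HK]]; [apply Rdiv_lt_0_compat; lra|].
  exists K; split; auto; intros x Hx; rewrite Cnorm_mul.
  specialize (HK x Hx); specialize (HB x); pose proof (Cnorm_ge0 (f x)).
  replace e with (e / (B + 1) * (B + 1)) by (field; lra); nra.
Qed.

Lemma C0_mul f g : C0 X d f -> C0 X d g -> C0 X d (fun x => Cmul (f x) (g x)).
Proof.
  intros Hf Hg; destruct (C0_bounded g Hg) as [B HB].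
  apply C0_mul_bounded with B; auto; apply Hg.
Qed.

Lemma C0_const0 : C0 X d (fun _ => C0x).
Proof.
  split; [apply continuous_const|]; intros e He.
  exists (closed_ball X d o 0); split; [apply Hprop|]; intros; rewrite Cnorm_C0; auto.
Qed.

Lemma continuous_uniform_on_ball a r e : continuous X d a -> 0 < e -> exists del, 0 < del /\
  forall s t, d o s <= r -> d o t <= r -> d s t < del -> Cnorm (Csub (a s) (a t)) <= e.
Proof.
  intros Ha He.
  assert (Hdl : forall y, exists del, 0 < del /\
            forall z, d y z < del -> Cnorm (Csub (a z) (a y)) < e / 2)
    by (intros y; apply Ha; lra).
  destruct (choice _ Hdl) as [dl Hdl'].
  destruct (Hprop o r X (fun y z => d y z < dl y / 2)) as [l Hl].
  - intros y; apply open_ball.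
  - intros x _; exists x; rewrite d_refl; destruct (Hdl' x); lra.
  - destruct (list_min_pos l (fun y => dl y / 2)) as [del [Hd Hmin]].
    { intros y _; destruct (Hdl' y); lra. }
    exists del; split; auto; intros s t Hs Ht Hst.
    destruct (Hl s Hs) as [y [Hy Hys]]; specialize (Hmin y Hy).
    destruct (Hdl' y) as [_ Hc]; pose proof (d_triangle y s t).
    pose proof (Hc s ltac:(lra)); pose proof (Hc t ltac:(lra)).
    eapply Rle_trans; [apply (Cnorm_sub_triangle _ (a y))|].
    rewrite (Cnorm_sub_sym (a y)); lra.
Qed.

Definition bump (c : R) (x : X) : Cx := mkC (clamp (c - d o x)) 0.

Lemma bump_norm_le1 c x : Cnorm (bump c x) <= 1.
Proof.
  unfold bump; rewrite Cnorm_real; pose proof (clamp_range (c - d o x)).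
  rewrite Rabs_right; lra.
Qed.

Lemma bump_lipschitz c s t : Cnorm (Csub (bump c s) (bump c t)) <= d s t.
Proof.
  unfold bump, Csub, Cadd, Copp; simpl; rewrite Ropp_0, Rplus_0_r, Cnorm_real.
  eapply Rle_trans; [apply clamp_lipschitz|].
  pose proof (d_triangle o s t); pose proof (d_triangle o t s); rewrite (d_sym t s) in *.
  apply Rabs_le; lra.
Qed.

Lemma bump_continuous c : continuous X d (bump c).
Proof.
  intros x e He; exists e; split; auto; intros y Hy.
  eapply Rle_lt_trans; [apply bump_lipschitz | rewrite d_sym; auto].
Qed.

Lemma bump_0 c x : c <= d o x -> bump c x = C0x.
Proof. intros; unfold bump, C0x; rewrite clamp_0 by lra; auto. Qed.

Lemma bump_1 c x : d o x <= c - 1 -> bump c x = Cone.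
Proof. intros; unfold bump, Cone; rewrite clamp_1 by lra; auto. Qed.

Lemma bump_C0 c : C0 X d (bump c).
Proof.
  split; [apply bump_continuous|]; intros e He.
  exists (closed_ball X d o c); split; [apply Hprop|].
  intros x Hx; unfold closed_ball in Hx; rewrite bump_0, Cnorm_C0 by lra; auto.
Qed.

Lemma U_mono (P Q : nat -> Prop) : U P -> (forall n, P n -> Q n) -> U Q.
Proof. apply HU. Qed.

Lemma U_and (P Q : nat -> Prop) : U P -> U Q -> U (fun n => P n /\ Q n).
Proof. apply HU. Qed.

Lemma U_exists (P : nat -> Prop) : U P -> exists n, P n.
Proof.
  intros H; apply NNPP; intros N; apply (proj1 (proj2 (proj2 HU))).
  apply (U_mono P); auto; intros n Pn; apply N; exists n; auto.
Qed.

Lemma U_true : U (fun _ => True).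
Proof.
  destruct (proj2 (proj2 (proj2 HU)) (fun _ => True)) as [H|H]; auto.
  apply (U_mono _ _ H); auto.
Qed.

Lemma U_forall_in {A} (l : list A) (P : A -> nat -> Prop) :
  (forall y, In y l -> U (P y)) -> U (fun n => forall y, In y l -> P y n).
Proof.
  induction l as [|a l IH]; intros H; [apply (U_mono _ _ U_true); intros n _ y []|].
  apply (U_mono _ _ (U_and _ _ (H a (or_introl eq_refl)) (IH (fun y Hy => H y (or_intror Hy))))).
  intros n [H1 H2] y [<-|Hy]; auto.
Qed.

Lemma U_forall_lt (P : nat -> nat -> Prop) K :
  (forall i, U (P i)) -> U (fun n => forall i, (i < K)%nat -> P i n).
Proof.
  induction K; intros H; [apply (U_mono _ _ U_true); intros n _ i Hi; lia|].
  apply (U_mono _ _ (U_and _ _ (IHK H) (H K))); intros n [H1 H2] i Hi.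
  destruct (Nat.eq_dec i K); subst; auto; apply H1; lia.
Qed.

Lemma ulimit_R (u : nat -> R) M : (forall n, Rabs (u n) <= M) ->
  exists L, forall eps, 0 < eps -> U (fun n => Rabs (u n - L) <= eps).
Proof.
  intros HM; set (E := fun y => U (fun n => y <= u n)).
  assert (Hb : bound E).
  { exists M; intros y Hy; destruct (U_exists _ Hy) as [n Hn].
    specialize (HM n); unfold Rabs in HM; destruct Rcase_abs in HM; lra. }
  assert (Hne : exists y, E y).
  { exists (- M); apply (U_mono _ _ U_true); intros n _.
    specialize (HM n); unfold Rabs in HM; destruct Rcase_abs in HM; lra. }
  destruct (completeness E Hb Hne) as [L [HL1 HL2]]; exists L; intros eps He.
  assert (Hlow : U (fun n => L - eps <= u n)).
  { apply NNPP; intros N; enough (L <= L - eps) by lra.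
    apply HL2; intros y Hy; destruct (Rle_lt_dec y (L - eps)); auto.
    exfalso; apply N; apply (U_mono _ _ Hy); intros; lra. }
  assert (Hup : U (fun n => u n <= L + eps)).
  { destruct (proj2 (proj2 (proj2 HU)) (fun n => u n <= L + eps)) as [H|H]; auto.
    exfalso; enough (L + eps <= L) by lra.
    apply HL1; apply (U_mono _ _ H); intros; lra. }
  apply (U_mono _ _ (U_and _ _ Hlow Hup)); intros n [H1 H2]; apply Rabs_le; lra.
Qed.

Lemma ulimit_C (z : nat -> Cx) M : (forall n, Cnorm (z n) <= M) ->
  exists L, forall eps, 0 < eps -> U (fun n => Cnorm (Csub (z n) L) <= eps).
Proof.
  intros HM.
  destruct (ulimit_R (fun n => re (z n)) M) as [L1 H1].
  { intros n; eapply Rle_trans; [apply Cnorm_re | auto]. }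
  destruct (ulimit_R (fun n => im (z n)) M) as [L2 H2].
  { intros n; eapply Rle_trans; [apply Cnorm_im | auto]. }
  exists (mkC L1 L2); intros eps He.
  apply (U_mono _ _ (U_and _ _ (H1 (eps/2) ltac:(lra)) (H2 (eps/2) ltac:(lra)))).
  intros n [A B]; eapply Rle_trans; [apply Cnorm_le_re_im|]; simpl; unfold Rminus in *; lra.
Qed.

Lemma ulimit_norm_le (z : nat -> Cx) L c : (forall n, Cnorm (z n) <= c) ->
  (forall eps, 0 < eps -> U (fun n => Cnorm (Csub (z n) L) <= eps)) -> Cnorm L <= c.
Proof.
  intros Hc HL; apply Rle_plus_epsilon; intros eps He.
  destruct (U_exists _ (HL eps He)) as [n Hn].
  pose proof (Cnorm_le_sub L (z n)); rewrite Cnorm_sub_sym in Hn; specialize (Hc n); lra.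
Qed.

Lemma U_ge (N : nat) : U (fun n => (N <= n)%nat).
Proof.
  induction N; [apply (U_mono _ _ U_true); intros; lia|].
  apply (U_mono _ _ (U_and _ _ IHN (HUnp N))); intros n [H1 H2]; lia.
Qed.

(* [prefix_len P n j] is the largest [k <= j] such that [P i n] holds for all [i < k]. *)
Fixpoint prefix_len (P : nat -> nat -> Prop) (n j : nat) : nat :=
  match j with
  | O => O
  | S j' => if excluded_middle_informative (P j' n /\ prefix_len P n j' = j')
            then S j' else prefix_len P n j'
  end.

Lemma prefix_len_spec P n j i : (i < prefix_len P n j)%nat -> P i n.
Proof.
  induction j; simpl; [lia|].
  destruct excluded_middle_informative as [[H1 H2]|H]; auto.
  intros Hi; destruct (Nat.eq_dec i j); subst; auto; apply IHj; lia.
Qed.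

Lemma prefix_len_full P n j : (forall i, (i < j)%nat -> P i n) -> prefix_len P n j = j.
Proof.
  induction j; simpl; auto; intros H.
  destruct excluded_middle_informative as [_|N]; auto; exfalso; apply N; split; auto.
Qed.

Lemma prefix_len_mono P n j k : (j <= k)%nat -> (prefix_len P n j <= prefix_len P n k)%nat.
Proof. induction 1; auto; simpl; destruct excluded_middle_informative as [[_ H2]|_]; lia. Qed.

Lemma U_diagonal (P : nat -> nat -> Prop) : (forall i, U (P i)) ->
  exists m : nat -> nat, (forall K, U (fun n => (K <= m n)%nat)) /\
    forall n i, (i < m n)%nat -> P i n.
Proof.
  intros HP; exists (fun n => prefix_len P n n); split.
  - intros K; apply (U_mono _ _ (U_and _ _ (U_ge K) (U_forall_lt P K HP))).
    intros n [H1 H2]; rewrite <- (prefix_len_full P n K H2); apply prefix_len_mono; auto.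
  - intros n i; apply prefix_len_spec.
Qed.

Lemma seq_bound_nonneg (F : Seq X) M : (forall n x, Cnorm (F n x) <= M) -> 0 <= M.
Proof. intros H; eapply Rle_trans; [apply Cnorm_ge0 | apply (H O o)]. Qed.

Lemma InSeq_add F G : InSeq X d F -> InSeq X d G -> InSeq X d (seq_add X F G).
Proof.
  intros [H1 [M1 B1]] [H2 [M2 B2]]; split; [intros n; apply C0_add; auto|].
  exists (M1 + M2); intros n x; eapply Rle_trans; [apply Cnorm_triangle|].
  specialize (B1 n x); specialize (B2 n x); lra.
Qed.

Lemma InSeq_sub F G : InSeq X d F -> InSeq X d G -> InSeq X d (seq_sub X F G).
Proof.
  intros [H1 [M1 B1]] [H2 [M2 B2]]; split; [intros n; apply C0_sub; auto|].
  exists (M1 + M2); intros n x; eapply Rle_trans; [apply Cnorm_sub_le|].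
  specialize (B1 n x); specialize (B2 n x); lra.
Qed.

Lemma InSeq_mul F G : InSeq X d F -> InSeq X d G -> InSeq X d (seq_mul X F G).
Proof.
  intros [H1 [M1 B1]] [H2 [M2 B2]]; split; [intros n; apply C0_mul; auto|].
  exists (M1 * M2); intros n x; apply Cmul_le; auto; eapply seq_bound_nonneg; eauto.
Qed.

Lemma InSeq_scal c F : InSeq X d F -> InSeq X d (seq_scal X c F).
Proof.
  intros [H1 [M1 B1]]; split.
  - intros n; unfold seq_scal.
    replace (fun x => Cmul c (F n x)) with (fun x => Cmul (F n x) c)
      by (apply functional_extensionality; intros; apply Cmul_comm).
    apply C0_mul_bounded with (Cnorm c); auto; [apply continuous_const | intros; lra].
  - exists (Cnorm c * M1); intros n x; apply Cmul_le; [lra | auto | eapply seq_bound_nonneg; eauto].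
Qed.

Lemma InSeq_diag a : C0 X d a -> InSeq X d (diag X a).
Proof.
  intros Ha; split; [intros n; auto|].
  destruct (C0_bounded a Ha) as [B HB]; exists B; intros; apply HB.
Qed.

Lemma seq_mul_comm F G : seq_mul X F G = seq_mul X G F.
Proof.
  unfold seq_mul; apply functional_extensionality; intros n.
  apply functional_extensionality; intros x; apply Cmul_comm.
Qed.

Lemma ueq_refl F : ueq X U F F.
Proof.
  intros eta He; apply (U_mono _ _ U_true); intros n _ x; unfold seq_sub.
  replace (Csub (F n x) (F n x)) with C0x by cx_ring; rewrite Cnorm_C0; lra.
Qed.

Definition unull_on_balls (F : Seq X) : Prop :=
  forall r eps, 0 < eps -> U (fun n => forall x, d o x <= r -> Cnorm (F n x) <= eps).

Lemma unull_on_balls_of_ult_null F : ult_null X U F -> unull_on_balls F.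
Proof.
  intros H r eps He; apply (U_mono _ _ (H eps He)); intros n Hn x _; specialize (Hn x); lra.
Qed.

Lemma unull_on_balls_add F G :
  unull_on_balls F -> unull_on_balls G -> unull_on_balls (seq_add X F G).
Proof.
  intros HF HG r eps He.
  apply (U_mono _ _ (U_and _ _ (HF r (eps/2) ltac:(lra)) (HG r (eps/2) ltac:(lra)))).
  intros n [A B] x Hx; eapply Rle_trans; [apply Cnorm_triangle|].
  specialize (A x Hx); specialize (B x Hx); lra.
Qed.

Lemma unull_on_balls_mul_bounded G F M : (forall n x, Cnorm (G n x) <= M) ->
  unull_on_balls F -> unull_on_balls (seq_mul X G F).
Proof.
  intros HM HF r eps He; pose proof (seq_bound_nonneg _ _ HM).
  apply (U_mono _ _ (HF r (eps / (M + 1)) ltac:(apply Rdiv_lt_0_compat; lra))).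
  intros n A x Hx; specialize (A x Hx); eapply Rle_trans.
  - apply Cmul_le; [apply HM | apply A | left; apply Rdiv_lt_0_compat; lra].
  - replace eps with ((M + 1) * (eps / (M + 1))) at 2 by (field; lra).
    apply Rmult_le_compat_r; [left; apply Rdiv_lt_0_compat|]; lra.
Qed.

Lemma unull_on_balls_of_InI F : InI X d U o F -> unull_on_balls F.
Proof.
  intros [_ [G [r [_ [HFG [Hr HG]]]]]] r0 eps He.
  apply (U_mono _ _ (U_and _ _ (Hr r0) (HFG eps He))).
  intros n [H1 H2] x Hx; specialize (H2 x); unfold seq_sub in H2.
  rewrite HG in H2 by lra; replace (Csub (F n x) C0x) with (F n x) in H2 by cx_ring; lra.
Qed.

(* The representative vanishing on B(m_n) is F (1 - bump_{m_n + 1}), with the radii m_n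
   given by the diagonal argument so that |F_n| <= 1/m_n on B(m_n + 1). *)
Lemma InI_of_unull_on_balls F : InSeq X d F -> unull_on_balls F -> InI X d U o F.
Proof.
  intros [HF0 [M HM]] HL; split; [split; eauto|].
  destruct (U_diagonal (fun i n => forall x, d o x <= INR i + 2 ->
                                    Cnorm (F n x) <= / (INR i + 1))) as [m [Hm Hsmall]].
  { intros i; apply HL; apply Rinv_0_lt_compat; pose proof (pos_INR i); lra. }
  set (cut := fun n x => Csub Cone (bump (INR (m n) + 1) x)).
  assert (Hcut : forall n x, Cnorm (cut n x) <= 2).
  { intros n x; eapply Rle_trans; [apply Cnorm_sub_le|].
    unfold Cone; rewrite Cnorm_real, Rabs_R1; pose proof (bump_norm_le1 (INR (m n) + 1) x); lra. }
  exists (fun n x => Cmul (F n x) (cut n x)), (fun n => INR (m n)); split; [|split; [|split]].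
  - split; [|exists (M * 2); intros n x; apply Cmul_le; auto; lra].
    intros n; apply C0_mul_bounded with 2; auto.
    apply (continuous_add (fun _ => Cone) (fun x => Copp (bump (INR (m n) + 1) x))).
    + apply continuous_const.
    + apply continuous_opp, bump_continuous.
  - intros eta Heta; destruct (archimed_cor1 eta Heta) as [K [HK1 HK2]].
    apply (U_mono _ _ (Hm K)); intros n Hn x; unfold seq_sub, cut.
    replace (Csub (F n x) (Cmul (F n x) (Csub Cone (bump (INR (m n) + 1) x))))
      with (Cmul (F n x) (bump (INR (m n) + 1) x)) by cx_ring.
    destruct (Rle_lt_dec (INR (m n) + 1) (d o x)).
    + rewrite bump_0, Cnorm_mul, Cnorm_C0 by auto; pose proof (Cnorm_ge0 (F n x)); nra.
    + assert (Hpos : (1 <= m n)%nat) by lia.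
      specialize (Hsmall n (m n - 1)%nat ltac:(lia) x).
      rewrite minus_INR in Hsmall by lia; simpl in Hsmall.
      replace (INR (m n) - 1 + 1) with (INR (m n)) in Hsmall by ring.
      specialize (Hsmall ltac:(lra)); apply le_INR in Hn, Hpos; simpl in Hpos.
      assert (/ INR (m n) <= / INR K) by (apply Rinv_le_contravar; [apply lt_0_INR|]; lia || lra).
      eapply Rle_trans; [apply Cmul_le; [apply Hsmall | apply bump_norm_le1 | lra]|]; lra.
  - intros r; destruct (nat_above r) as [N HN].
    apply (U_mono _ _ (Hm N)); intros n Hn; apply le_INR in Hn; lra.
  - intros n x Hx; unfold cut; rewrite bump_1 by lra; cx_ring.
Qed.

Lemma InI_iff F : InI X d U o F <-> InSeq X d F /\ unull_on_balls F.
Proof.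
  split; [intros H; split; [apply H | apply unull_on_balls_of_InI; auto]|].
  intros [H1 H2]; apply InI_of_unull_on_balls; auto.
Qed.

Lemma InI_zero : InI X d U o (seq_zero X).
Proof.
  apply InI_of_unull_on_balls.
  - split; [intros; apply C0_const0|]; exists 0; intros; unfold seq_zero; rewrite Cnorm_C0; lra.
  - intros r eps He; apply (U_mono _ _ U_true); intros n _ x _.
    unfold seq_zero; rewrite Cnorm_C0; lra.
Qed.

Lemma InI_add F G : InI X d U o F -> InI X d U o G -> InI X d U o (seq_add X F G).
Proof.
  rewrite !InI_iff; intros [A B] [C D]; split; [apply InSeq_add | apply unull_on_balls_add]; auto.
Qed.

Lemma InI_scal c F : InI X d U o F -> InI X d U o (seq_scal X c F).
Proof.
  rewrite !InI_iff; intros [A B]; split; [apply InSeq_scal; auto|].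
  apply (unull_on_balls_mul_bounded (fun _ _ => c)) with (Cnorm c); auto; intros; lra.
Qed.

Lemma InI_mul F G : InI X d U o F -> InSeq X d G ->
  InI X d U o (seq_mul X G F) /\ InI X d U o (seq_mul X F G).
Proof.
  rewrite !InI_iff; intros [A B] C.
  assert (HGF : unull_on_balls (seq_mul X G F))
    by (destruct C as [_ [M HM]]; apply unull_on_balls_mul_bounded with M; auto).
  rewrite (seq_mul_comm F G); split; split; auto; apply InSeq_mul; auto.
Qed.

Lemma InI_closed F : InSeq X d F ->
  (forall e, 0 < e -> exists G, InI X d U o G /\ ult_le X U (seq_sub X F G) e) ->
  InI X d U o F.
Proof.
  intros HF H; apply InI_of_unull_on_balls; auto; intros r eps He.
  destruct (H (eps/3) ltac:(lra)) as [G [HG HFG]]; apply unull_on_balls_of_InI in HG.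
  apply (U_mono _ _ (U_and _ _ (HG r (eps/3) ltac:(lra)) (HFG (eps/3) ltac:(lra)))).
  intros n [A B] x Hx; specialize (A x Hx); specialize (B x); unfold seq_sub in B.
  pose proof (Cnorm_le_sub (F n x) (G n x)); lra.
Qed.

Lemma InCU_of_InI F : InI X d U o F -> InCU X d U o F.
Proof.
  intros [HF [G [r [HG [HFG [Hr HG0]]]]]]; split; auto; exists G; do 2 (split; auto).
  intros r0 e Hr0 He; exists 1; split; [lra|]; apply (U_mono _ _ (Hr r0)).
  intros n Hn s t Hs Ht _; rewrite !HG0 by lra.
  replace (Csub C0x C0x) with C0x by cx_ring; rewrite Cnorm_C0; lra.
Qed.

Definition unit_seq : Seq X := fun n => bump (INR n).

Lemma InSeq_unit_seq : InSeq X d unit_seq.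
Proof. split; [intros n; apply bump_C0 | exists 1; intros; apply bump_norm_le1]. Qed.

Lemma InCU_unit_seq : InCU X d U o unit_seq.
Proof.
  split; [apply InSeq_unit_seq|]; exists unit_seq; split; [apply InSeq_unit_seq|].
  split; [apply ueq_refl|].
  intros r e _ He; exists e; split; auto; apply (U_mono _ _ U_true).
  intros n _ s t _ _ Hst; eapply Rle_trans; [apply bump_lipschitz | lra].
Qed.

Lemma InI_unit_seq_mul_sub F : InSeq X d F ->
  InI X d U o (seq_sub X (seq_mul X unit_seq F) F).
Proof.
  intros HF; apply InI_of_unull_on_balls.
  - apply InSeq_sub; auto; apply InSeq_mul; auto; apply InSeq_unit_seq.
  - intros r eps He; destruct (nat_above (r + 1)) as [N HN].
    apply (U_mono _ _ (U_ge N)); intros n Hn x Hx; apply le_INR in Hn.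
    unfold seq_sub, seq_mul, unit_seq; rewrite bump_1, Cmul_1l by lra.
    replace (Csub (F n x) (F n x)) with C0x by cx_ring; rewrite Cnorm_C0; lra.
Qed.

Lemma InCU_diag a : C0 X d a -> InCU X d U o (diag X a).
Proof.
  intros Ha; split; [apply InSeq_diag; auto|]; exists (diag X a).
  split; [apply InSeq_diag; auto|]; split; [apply ueq_refl|].
  intros r e _ He; destruct (continuous_uniform_on_ball a r e (proj1 Ha) He) as [del [Hd H]].
  exists del; split; auto; apply (U_mono _ _ U_true); auto.
Qed.

Lemma diag_injective_mod_I a b :
  InI X d U o (seq_sub X (diag X a) (diag X b)) -> a = b.
Proof.
  intros H; apply unull_on_balls_of_InI in H; apply functional_extensionality; intros x.
  apply Csub_eq0, Rle_antisym; [|apply Cnorm_ge0].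
  apply Rle_plus_epsilon; intros eps He; destruct (U_exists _ (H (d o x) eps He)) as [n Hn].
  specialize (Hn x ltac:(lra)); unfold seq_sub, diag in Hn; lra.
Qed.

Lemma InI_of_mul_diag_InI F : InSeq X d F ->
  (forall a, C0 X d a -> InI X d U o (seq_mul X F (diag X a))) -> InI X d U o F.
Proof.
  intros HF H; apply InI_of_unull_on_balls; auto; intros r eps He.
  specialize (H (bump (r + 1)) (bump_C0 _)); apply unull_on_balls_of_InI in H.
  apply (U_mono _ _ (H r eps He)); intros n Hn x Hx; specialize (Hn x Hx).
  unfold seq_mul, diag in Hn; rewrite bump_1, Cmul_comm, Cmul_1l in Hn by lra; auto.
Qed.

Definition uequicont_at (h : Seq X) : Prop :=
  forall x e, 0 < e -> exists del, 0 < del /\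
    U (fun n => forall y, d x y < del -> Cnorm (Csub (h n y) (h n x)) <= e).

Definition pointwise_ulimit (h : Seq X) (b : X -> Cx) : Prop :=
  forall x eps, 0 < eps -> U (fun n => Cnorm (Csub (h n x) (b x)) <= eps).

Definition vanish_uniformly (h : Seq X) : Prop :=
  forall e, 0 < e -> exists K, compact_set X d K /\ forall n x, ~ K x -> Cnorm (h n x) <= e.

Lemma pointwise_ulimit_exists h M : (forall n x, Cnorm (h n x) <= M) ->
  exists b, pointwise_ulimit h b.
Proof.
  intros HM; destruct (choice (fun x L => forall eps, 0 < eps ->
                                U (fun n => Cnorm (Csub (h n x) L) <= eps))) as [b Hb].
  - intros x; apply (ulimit_C (fun n => h n x) M); auto.
  - exists b; exact Hb.
Qed.

Lemma pointwise_ulimit_modulus h b x del e : pointwise_ulimit h b ->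
  U (fun n => forall y, d x y < del -> Cnorm (Csub (h n y) (h n x)) <= e) ->
  forall y, d x y < del -> Cnorm (Csub (b y) (b x)) <= e.
Proof.
  intros Hb Hmod y Hy; apply Rle_plus_epsilon; intros eps He.
  destruct (U_exists _ (U_and _ _ Hmod (U_and _ _ (Hb x (eps/2) ltac:(lra))
                                               (Hb y (eps/2) ltac:(lra)))))
    as [n [Hn [Hx' Hy']]].
  specialize (Hn y Hy); rewrite Cnorm_sub_sym in Hy'.
  pose proof (Cnorm_sub_triangle (b y) (h n y) (b x));
  pose proof (Cnorm_sub_triangle (h n y) (h n x) (b x)); lra.
Qed.

Lemma pointwise_ulimit_continuous h b : uequicont_at h -> pointwise_ulimit h b ->
  continuous X d b.
Proof.
  intros Heq Hb x e He; destruct (Heq x (e/2) ltac:(lra)) as [del [Hd Hmod]].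
  exists del; split; auto; intros y Hy.
  pose proof (pointwise_ulimit_modulus h b x del (e/2) Hb Hmod y Hy); lra.
Qed.

Lemma pointwise_ulimit_uniform_on_compact h b K : compact_set X d K ->
  uequicont_at h -> pointwise_ulimit h b ->
  forall e, 0 < e -> U (fun n => forall x, K x -> Cnorm (Csub (h n x) (b x)) <= e).
Proof.
  intros CK Heq Hb e He.
  destruct (choice _ (fun y => Heq y (e/3) ltac:(lra))) as [dl Hdl].
  destruct (CK X (fun y z => d y z < dl y)) as [l Hl].
  - intros y; apply open_ball.
  - intros x _; exists x; rewrite d_refl; apply Hdl.
  - apply (U_mono _ _ (U_forall_in l _ (fun y _ =>
             U_and _ _ (proj2 (Hdl y)) (Hb y (e/3) ltac:(lra))))).
    intros n Hn x Kx; destruct (Hl x Kx) as [y [Hy Hyx]]; destruct (Hn y Hy) as [Hmod Hny].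
    pose proof (pointwise_ulimit_modulus h b y (dl y) (e/3) Hb (proj2 (Hdl y)) x Hyx).
    specialize (Hmod x Hyx); rewrite Cnorm_sub_sym in H.
    pose proof (Cnorm_sub_triangle (h n x) (h n y) (b x));
    pose proof (Cnorm_sub_triangle (h n y) (b y) (b x)); lra.
Qed.

(* Equicontinuity gives uniform convergence on compacta; uniform vanishing at infinity
   handles the rest of X. *)
Lemma pointwise_ulimit_uniform h b : uequicont_at h -> vanish_uniformly h ->
  pointwise_ulimit h b -> C0 X d b /\ ult_null X U (seq_sub X h (diag X b)).
Proof.
  intros Heq Hvan Hb.
  assert (Hbvan : forall e K, (forall n x, ~ K x -> Cnorm (h n x) <= e) ->
                    forall x, ~ K x -> Cnorm (b x) <= e).
  { intros e K HK x Kx; apply (ulimit_norm_le (fun n => h n x)); auto. }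
  split; [split; [apply (pointwise_ulimit_continuous h); auto|]|].
  - intros e He; destruct (Hvan (e/2) ltac:(lra)) as [K [CK HK]].
    exists K; split; auto; intros x Kx; pose proof (Hbvan _ K HK x Kx); lra.
  - intros eta Heta; destruct (Hvan (eta/2) ltac:(lra)) as [K [CK HK]].
    apply (U_mono _ _ (pointwise_ulimit_uniform_on_compact h b K CK Heq Hb eta Heta)).
    intros n Hn x; unfold seq_sub, diag; rewrite Rplus_0_l.
    destruct (classic (K x)) as [Kx|Kx]; auto.
    pose proof (Hbvan _ K HK x Kx); pose proof (HK n x Kx).
    pose proof (Cnorm_sub_le (h n x) (b x)); lra.
Qed.

Lemma uequicont_at_mul_diag G a MG A : (forall n x, Cnorm (G n x) <= MG) ->
  uequicont X d U o G -> continuous X d a -> (forall x, Cnorm (a x) <= A) ->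
  uequicont_at (seq_mul X G (diag X a)).
Proof.
  intros HMG HG Ha HA x e He.
  pose proof (seq_bound_nonneg _ _ HMG) as HMG0.
  assert (HA0 : 0 <= A) by (eapply Rle_trans; [apply Cnorm_ge0 | apply (HA o)]).
  destruct (Ha x (e / (2 * (MG + 1))) (Rdiv_half_pos MG e HMG0 He)) as [d1 [Hd1 H1]].
  destruct (HG (d o x + 1) (e / (2 * (A + 1))) ltac:(pose proof (proj1 Hmet o x); lra)
              (Rdiv_half_pos A e HA0 He)) as [d2 [Hd2 H2]].
  exists (Rmin 1 (Rmin d1 d2)); split; [repeat apply Rmin_pos; auto; lra|].
  apply (U_mono _ _ H2); intros n Hn y Hy.
  pose proof (Rmin_l 1 (Rmin d1 d2)); pose proof (Rmin_r 1 (Rmin d1 d2)).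
  pose proof (Rmin_l d1 d2); pose proof (Rmin_r d1 d2); pose proof (d_triangle o x y).
  assert (HGy : Cnorm (Csub (G n y) (G n x)) <= e / (2 * (A + 1)))
    by (apply Hn; try lra; rewrite d_sym; lra).
  assert (Hay : Cnorm (Csub (a y) (a x)) <= e / (2 * (MG + 1))) by (left; apply H1; lra).
  unfold seq_mul, diag.
  replace (Csub (Cmul (G n y) (a y)) (Cmul (G n x) (a x)))
    with (Cadd (Cmul (G n y) (Csub (a y) (a x))) (Cmul (Csub (G n y) (G n x)) (a x))) by cx_ring.
  eapply Rle_trans; [apply Cnorm_triangle|].
  pose proof (Cmul_le _ _ _ _ (HMG n y) Hay ltac:(left; apply Rdiv_half_pos; auto)).
  pose proof (Cmul_le _ _ _ _ HGy (HA x) HA0).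
  pose proof (Rmult_div_half_le MG e HMG0 He); pose proof (Rmult_div_half_le A e HA0 He).
  nra.
Qed.

Lemma InCU_mul_diag F a : InCU X d U o F -> C0 X d a ->
  exists b, C0 X d b /\ InI X d U o (seq_sub X (seq_mul X F (diag X a)) (diag X b)).
Proof.
  intros [HF [G [[HG0 [MG HMG]] [HFG HGeq]]]] Ha.
  destruct (C0_bounded a Ha) as [A HA].
  set (h := seq_mul X G (diag X a)).
  assert (Hh : forall n x, Cnorm (h n x) <= MG * Cnorm (a x))
    by (intros n x; apply Cmul_le; [apply HMG | apply Rle_refl | apply Cnorm_ge0]).
  assert (Hvan : vanish_uniformly h).
  { intros e He; pose proof (seq_bound_nonneg _ _ HMG).
    destruct (proj2 Ha (e / (MG + 1))) as [K [CK HK]]; [apply Rdiv_lt_0_compat; lra|].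
    exists K; split; auto; intros n x Kx; eapply Rle_trans; [apply Hh|].
    replace e with ((MG + 1) * (e / (MG + 1))) by (field; lra).
    specialize (HK x Kx); pose proof (Cnorm_ge0 (a x)); nra. }
  destruct (pointwise_ulimit_exists h (MG * A)) as [b Hb].
  { intros n x; eapply Rle_trans; [apply Hh|]; apply Rmult_le_compat_l; auto.
    eapply seq_bound_nonneg; eauto. }
  destruct (pointwise_ulimit_uniform h b) as [Hbc Hhb]; auto.
  { apply (uequicont_at_mul_diag G a MG A); auto; apply Ha. }
  exists b; split; auto; apply InI_of_unull_on_balls.
  - apply InSeq_sub; [apply InSeq_mul; auto|]; apply InSeq_diag; auto.
  - replace (seq_sub X (seq_mul X F (diag X a)) (diag X b))
      with (seq_add X (seq_mul X (diag X a) (seq_sub X F G)) (seq_sub X h (diag X b))).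
    + apply unull_on_balls_add; [|apply unull_on_balls_of_ult_null; auto].
      apply unull_on_balls_mul_bounded with A; [intros; apply HA|].
      apply unull_on_balls_of_ult_null, HFG.
    + unfold h; apply functional_extensionality; intros n.
      apply functional_extensionality; intros x; unfold seq_add, seq_sub, seq_mul, diag; cx_ring.
Qed.

Lemma uniform_cauchy_limit_C0 (ak : nat -> X -> Cx) : (forall k, C0 X d (ak k)) ->
  (forall k j x, Cnorm (Csub (ak k x) (ak j x)) <= inv_succ k + inv_succ j) ->
  exists a, C0 X d a /\ forall k x, Cnorm (Csub (ak k x) (a x)) <= 2 * inv_succ k.
Proof.
  intros Hak Hcau.
  assert (Hlim : forall x, exists L, forall k, Cnorm (Csub (ak k x) L) <= 2 * inv_succ k).
  { intros x.
    destruct (cauchy_limit_R (fun k => re (ak k x))) as [L1 H1].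
    { intros k j; eapply Rle_trans; [|apply (Hcau k j x)].
      eapply Rle_trans; [|apply Cnorm_re]; simpl; unfold Rminus; apply Rle_refl. }
    destruct (cauchy_limit_R (fun k => im (ak k x))) as [L2 H2].
    { intros k j; eapply Rle_trans; [|apply (Hcau k j x)].
      eapply Rle_trans; [|apply Cnorm_im]; simpl; unfold Rminus; apply Rle_refl. }
    exists (mkC L1 L2); intros k; eapply Rle_trans; [apply Cnorm_le_re_im|].
    specialize (H1 k); specialize (H2 k); simpl; unfold Rminus in *; lra. }
  destruct (choice _ Hlim) as [a Ha]; exists a; split; [|intros k x; apply Ha].
  assert (Ha' : forall k x, Cnorm (Csub (a x) (ak k x)) <= 2 * inv_succ k)
    by (intros; rewrite Cnorm_sub_sym; auto).
  split.
  - intros x e He; destruct (inv_succ_lt (e/8) ltac:(lra)) as [k Hk].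
    destruct (proj1 (Hak k) x (e/4) ltac:(lra)) as [del [Hd Hdel]].
    exists del; split; auto; intros y Hy; specialize (Hdel y Hy).
    pose proof (Cnorm_sub_triangle (a y) (ak k y) (a x));
    pose proof (Cnorm_sub_triangle (ak k y) (ak k x) (a x)).
    pose proof (Ha' k y); pose proof (Ha x k); lra.
  - intros e He; destruct (inv_succ_lt (e/8) ltac:(lra)) as [k Hk].
    destruct (proj2 (Hak k) (e/2) ltac:(lra)) as [K [CK HK]].
    exists K; split; auto; intros x Kx; specialize (HK x Kx).
    pose proof (Cnorm_le_sub (a x) (ak k x)); pose proof (Ha' k x); lra.
Qed.

Lemma diag_dist_le F a1 a2 G1 G2 e1 e2 : InI X d U o G1 -> InI X d U o G2 ->
  ult_le X U (seq_sub X (seq_sub X F (diag X a1)) G1) e1 ->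
  ult_le X U (seq_sub X (seq_sub X F (diag X a2)) G2) e2 ->
  forall x, Cnorm (Csub (a1 x) (a2 x)) <= e1 + e2.
Proof.
  intros HG1 HG2 H1 H2 x; apply Rle_plus_epsilon; intros eps He.
  apply unull_on_balls_of_InI in HG1, HG2.
  destruct (U_exists _ (U_and _ _ (U_and _ _ (HG1 (d o x) (eps/4) ltac:(lra))
                                              (HG2 (d o x) (eps/4) ltac:(lra)))
                                  (U_and _ _ (H1 (eps/4) ltac:(lra)) (H2 (eps/4) ltac:(lra)))))
    as [n [[A1 A2] [A3 A4]]].
  specialize (A1 x ltac:(lra)); specialize (A2 x ltac:(lra)); specialize (A3 x); specialize (A4 x).
  unfold seq_sub, diag in A3, A4.
  replace (Csub (a1 x) (a2 x)) with
    (Cadd (Csub (Csub (Csub (F n x) (a2 x)) (G2 n x)) (Csub (Csub (F n x) (a1 x)) (G1 n x)))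
          (Csub (G2 n x) (G1 n x))) by cx_ring.
  eapply Rle_trans; [apply Cnorm_triangle|].
  pose proof (Cnorm_sub_le (Csub (Csub (F n x) (a2 x)) (G2 n x))
                           (Csub (Csub (F n x) (a1 x)) (G1 n x))).
  pose proof (Cnorm_sub_le (G2 n x) (G1 n x)); lra.
Qed.

Lemma diag_closed_mod_I F : InSeq X d F ->
  (forall e, 0 < e -> exists a G, C0 X d a /\ InI X d U o G /\
       ult_le X U (seq_sub X (seq_sub X F (diag X a)) G) e) ->
  exists a, C0 X d a /\ InI X d U o (seq_sub X F (diag X a)).
Proof.
  intros HF H.
  destruct (choice (fun k (p : (X -> Cx) * Seq X) => C0 X d (fst p) /\ InI X d U o (snd p) /\
              ult_le X U (seq_sub X (seq_sub X F (diag X (fst p))) (snd p)) (inv_succ k)))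
    as [p Hp].
  { intros k; destruct (H (inv_succ k) (inv_succ_pos k)) as [a [G HaG]]; exists (a, G); auto. }
  destruct (uniform_cauchy_limit_C0 (fun k => fst (p k))) as [a [Ha Hak]].
  { intros k; apply Hp. }
  { intros k j; destruct (Hp k) as [_ [Ik Uk]]; destruct (Hp j) as [_ [Ij Uj]].
    apply (diag_dist_le F _ _ _ _ _ _ Ik Ij Uk Uj). }
  exists a; split; auto; apply InI_closed; [apply InSeq_sub; auto; apply InSeq_diag; auto|].
  intros e He; destruct (inv_succ_lt (e/3) ltac:(lra)) as [k Hk].
  destruct (Hp k) as [_ [Ik Uk]]; exists (snd (p k)); split; auto; intros eta Heta.
  apply (U_mono _ _ (Uk eta Heta)); intros n Hn x; specialize (Hn x); specialize (Hak k x).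
  unfold seq_sub, diag in *.
  replace (Csub (Csub (F n x) (a x)) (snd (p k) n x)) with
    (Cadd (Csub (Csub (F n x) (fst (p k) x)) (snd (p k) n x)) (Csub (fst (p k) x) (a x)))
    by cx_ring.
  eapply Rle_trans; [apply Cnorm_triangle | lra].
Qed.

End Ultrapower.

Theorem mainTheorem4 (X : Type) (d : X -> X -> R) (o : X)
  (U : (nat -> Prop) -> Prop)
  (Hmet : is_metric X d) (Hprop : proper_metric X d)
  (Hsc : second_countable X d) (Hlc : locally_compact X d)
  (HU : ultrafilter U) (HUnp : nonprincipal U) :
  ( InI X d U o (seq_zero X) /\
    (forall F G, InI X d U o F -> InI X d U o G -> InI X d U o (seq_add X F G)) /\
    (forall c F, InI X d U o F -> InI X d U o (seq_scal X c F)) /\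
    (forall F G, InI X d U o F -> InSeq X d G ->
       InI X d U o (seq_mul X G F) /\ InI X d U o (seq_mul X F G)) /\
    (forall F, InSeq X d F ->
       (forall e, 0 < e -> exists G, InI X d U o G /\ ult_le X U (seq_sub X F G) e) ->
       InI X d U o F) /\
    (forall F, InI X d U o F -> InCU X d U o F) ) /\
  (exists E, InCU X d U o E /\
     forall F, InCU X d U o F ->
       InI X d U o (seq_sub X (seq_mul X E F) F) /\
       InI X d U o (seq_sub X (seq_mul X F E) F)) /\
  (forall a, C0 X d a -> InCU X d U o (diag X a)) /\
  (forall a b, C0 X d a -> C0 X d b ->
     InI X d U o (seq_sub X (diag X a) (diag X b)) -> a = b) /\
  ( (forall a F, C0 X d a -> InCU X d U o F ->
       (exists b, C0 X d b /\
          InI X d U o (seq_sub X (seq_mul X F (diag X a)) (diag X b))) /\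
       (exists b, C0 X d b /\
          InI X d U o (seq_sub X (seq_mul X (diag X a) F) (diag X b)))) /\
    (forall F, InCU X d U o F ->
       (forall e, 0 < e -> exists a G, C0 X d a /\ InI X d U o G /\
            ult_le X U (seq_sub X (seq_sub X F (diag X a)) G) e) ->
       exists a, C0 X d a /\ InI X d U o (seq_sub X F (diag X a))) /\
    (forall F, InCU X d U o F ->
       (forall a, C0 X d a -> InI X d U o (seq_mul X F (diag X a))) ->
       InI X d U o F) ).
Proof.
  split; [|split; [|split; [|split]]].
  - split; [|split; [|split; [|split; [|split]]]]; intros.
    + apply InI_zero; auto.
    + apply InI_add; auto.
    + apply InI_scal; auto.
    + apply InI_mul; auto.
    + apply InI_closed; auto.
    + apply InCU_of_InI; auto.
  - exists (unit_seq X d o); split; [apply InCU_unit_seq|]; auto.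
    intros F [HF _]; rewrite (seq_mul_comm X F).
    split; apply InI_unit_seq_mul_sub; auto.
  - intros a Ha; apply InCU_diag; auto.
  - intros a b _ _; apply diag_injective_mod_I; auto.
  - split; [|split].
    + intros a F Ha HF; rewrite (seq_mul_comm X (diag X a)).
      split; apply InCU_mul_diag; auto.
    + intros F [HF _]; apply diag_closed_mod_I; auto.
    + intros F [HF _]; apply InI_of_mul_diag_InI; auto.
Qed.
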